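(* With $Q$, $v$, $\lambda$, $Q_\infty$ and $S(\infty)$ as in the context, the forgetful functor (from representations of $\overline{Q_\infty}$ to representations of $\bar Q$) induces a bijection between isomorphism classes of simple finite-dimensional $\Pi^\lambda Q_\infty$-modules $X$ with $\dim X_\infty\le 1$ other than $S(\infty)$, and isomorphism classes of nearly representations of $\Pi^\lambda Q$ (with respect to $v$) which are simple as representations of $\bar Q$.
   Context: $K$ is an algebraically closed field, $Q$ a quiver with vertex set $I$, $v\in I$, $\lambda\in K^I$. Each arrow $a$ has tail $t(a)$ and head $h(a)$. The double $\bar Q$ is obtained by adjoining an arrow $a^*\colon h(a)\to t(a)$ for each arrow $a$. For a finite-dimensional representation $X$ of $\bar Q$ and $i\in I$ set $X_{c,i}=\sum_{a\in Q,\,h(a)=i}X_aX_{a^*}-\sum_{a\in Q,\,t(a)=i}X_{a^*}X_a-\lambda_i 1_{X_i}$. The deformed preprojective algebra $\Pi^\lambda Q$ is $K\bar Q$ modulo the relation $\sum_{a\in Q}(aa^*-a^*a)-\sum_i\lambda_ie_i$; its modules are representations with all $X_{c,i}=0$. A nearly representation of $\Pi^\lambda Q$ (with respect to $v$) is a finite-dimensional representation $X$ of $\bar Q$ with $\sum_i\lambda_i\dim X_i=0$, $X_{c,i}=0$ for $i\ne v$ and $\operatorname{rank}(X_{c,v})\le1$. $Q_\infty$ is obtained from $Q$ by adjoining a vertex $\infty$ and an arrow $a\colon\infty\to v$; $\lambda$ is extended by $\lambda_\infty=0$; $S(\infty)$ is the simple $\Pi^\lambda Q_\infty$-module that is one-dimensional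 at $\infty$ and zero elsewhere. *)

From HB Require Import structures.
From mathcomp Require Import all_boot all_order all_algebra.
Set Implicit Arguments. Unset Strict Implicit. Unset Printing Implicit Defensive.
Import GRing.Theory.
Local Open Scope ring_scope.

(* A finite-dimensional representation assigns K^(rdim i) to vertex i and to
   each arrow b a linear map K^(rdim (tl b)) -> K^(rdim (hd b)), encoded as a
   matrix acting on ROW vectors by right multiplication (v |-> v *m rmap b).
   Hence the composite "first f then g" has matrix  F *m G. *)
Section Reps.
Variables (K : fieldType) (V B : Type) (tl hd : B -> V).

Record rep := Rep {
  rdim : V -> nat;
  rmap : forall b : B, 'M[K]_(rdim (tl b), rdim (hd b)) }.

Definition stable (X : rep) (U : forall i, 'M[K]_(rdim X i)) : Prop :=
  forall b : B, (U (tl b) *m rmap X b <= U (hd b))%MS.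

Definition simple_rep (X : rep) : Prop :=
  (exists i, (0 < rdim X i)%N) /\
  forall U : forall i, 'M[K]_(rdim X i), stable U ->
    (forall i, U i = 0) \/ (forall i, row_full (U i)).

Definition rep_iso (X Y : rep) : Prop :=
  exists phi : forall i, 'M[K]_(rdim X i, rdim Y i),
    (forall i, row_free (phi i) && row_full (phi i)) /\
    (forall b, rmap X b *m phi (hd b) = phi (tl b) *m rmap Y b).
End Reps.

(* Arrows of the double of (A, t, h): inl a = a, inr a = a^*. *)
Definition dtail (I A : Type) (t h : A -> I) (b : A + A) : I :=
  match b with inl a => t a | inr a => h a end.
Definition dhead (I A : Type) (t h : A -> I) (b : A + A) : I :=
  match b with inl a => h a | inr a => t a end.

Definition drep (K : fieldType) (I A : Type) (t h : A -> I) :=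
  rep K (dtail t h) (dhead t h).

Section Defect.
Variables (K : fieldType) (I A : finType) (t h : A -> I) (lam : I -> K).

(* X_{c,i} = sum_{h a = i} X_a X_{a^*} - sum_{t a = i} X_{a^*} X_a - lam_i 1.
   X_a X_{a^*} (apply a^* first) has matrix  X_{a^*} *m X_a.  conform_mx only
   serves as the transport along the equality h a = i (resp. t a = i). *)
Definition defect (X : drep K t h) (i : I) : 'M[K]_(rdim X i) :=
  \sum_(a | h a == i) conform_mx (0 : 'M[K]_(rdim X i))
                         (rmap X (inr a) *m rmap X (inl a))
  - \sum_(a | t a == i) conform_mx (0 : 'M[K]_(rdim X i))
                         (rmap X (inl a) *m rmap X (inr a))
  - lam i *: 1%:M.

Definition is_Pi_module (X : drep K t h) : Prop := forall i, defect X i = 0.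

Definition nearly_rep (v : I) (X : drep K t h) : Prop :=
  [/\ \sum_i lam i * (rdim X i)%:R = 0,
      (forall i, i != v -> defect X i = 0)
    & (\rank (defect X v) <= 1)%N].
End Defect.

(* Vertices option I (None = infinity), arrows option A (None = new arrow
   infinity -> v). *)
Definition itail (I A : Type) (t : A -> I) (o : option A) : option I :=
  match o with Some a => Some (t a) | None => None end.
Definition ihead (I A : Type) (h : A -> I) (v : I) (o : option A) : option I :=
  match o with Some a => Some (h a) | None => Some v end.
Definition ilam (K : fieldType) (I : Type) (lam : I -> K) (o : option I) : K :=
  match o with Some i => lam i | None => 0 end.

Definition drep_inf (K : fieldType) (I A : Type) (t h : A -> I) (v : I) :=
  drep K (itail t) (ihead h v).

Definition S_inf (K : fieldType) (I A : Type) (t h : A -> I) (v : I)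
  : drep_inf K t h v :=
  @Rep K _ _ _ _ (fun o => if o is None then 1%N else 0%N) (fun _ => 0).

Definition restrict (K : fieldType) (I A : Type) (t h : A -> I) (v : I)
  (X : drep_inf K t h v) : drep K t h :=
  @Rep K _ _ (dtail t h) (dhead t h) (fun i => rdim X (Some i))
    (fun b => match b as b0 return
              'M[K]_(rdim X (Some (dtail t h b0)), rdim X (Some (dhead t h b0)))
            with
            | inl a => rmap X (inl (Some a))
            | inr a => rmap X (inr (Some a))
            end).

Definition source_obj (K : fieldType) (I A : finType) (t h : A -> I) (v : I)
  (lam : I -> K) (X : drep_inf K t h v) : Prop :=
  [/\ is_Pi_module (ilam lam) X, simple_rep X, (rdim X None <= 1)%N
    & ~ rep_iso X (S_inf K t h v)].

Definition target_obj (K : fieldType) (I A : finType) (t h : A -> I) (v : I)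
  (lam : I -> K) (Y : drep K t h) : Prop :=
  nearly_rep lam v Y /\ simple_rep Y.

(* If X is a Pi^lam Q_inf-module, the relation at v says that the defect at v of
   its restriction is -X_a X_{a^*}, which factors through X_inf; hence it has rank
   at most dim X_inf <= 1, and the traces of all defects sum to
   -sum_i lam_i dim X_i = 0.  Conversely the defect at v of a nearly
   representation factors through a space of dimension equal to its rank, which
   defines X_inf, X_a and X_{a^*}; the new defect at inf is then a matrix of size
   at most 1 with trace tr Y_{c,v} = 0.
   A subrepresentation U of the restriction is stable under the defect at v, so
   either X_{a^*} kills U_v (extend U by 0 at inf) or U_v contains the image of
   X_a (extend U by X_inf).  For a simple X other than S(inf), X_a is injective
   and X_{a^*} surjective, so X_a X_{a^*} is a full-rank factorization of the
   defect at v; such factorizations are unique up to isomorphism, which lets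
   isomorphisms of restrictions extend to inf. *)
From HB Require Import structures.
From mathcomp Require Import all_boot all_order all_algebra.
Set Implicit Arguments. Unset Strict Implicit. Unset Printing Implicit Defensive.
Import GRing.Theory.
Local Open Scope ring_scope.

Lemma big_option (R : Type) (idx : R) (op : Monoid.com_law idx) (I : finType)
    (F : option I -> R) :
  \big[op/idx]_o F o = op (F None) (\big[op/idx]_i F (Some i)).
Proof.
rewrite (bigD1 None) //=; congr (op _ _).
rewrite (reindex_omap Some id) => [|[i|]//].
by apply: eq_bigl => i /=; rewrite eqxx.
Qed.

Lemma big_option_cond (R : Type) (idx : R) (op : Monoid.com_law idx) (I : finType)
    (P : pred (option I)) (F : option I -> R) :
  \big[op/idx]_(o | P o) F o =
    op (if P None then F None else idx) (\big[op/idx]_(i | P (Some i)) F (Some i)).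
Proof. by rewrite big_mkcond big_option [in RHS]big_mkcond. Qed.

Section Matrices.
Variable K : fieldType.

Lemma mxtrace_le1_eq0 d (M : 'M[K]_d) : (d <= 1)%N -> \tr M = 0 -> M = 0.
Proof.
case: d M => [|[|//]] M _; first by rewrite thinmx0.
by rewrite trace_mx11 => M00; apply/matrixP => i j; rewrite !ord1 M00 mxE.
Qed.

Lemma row_free_le1 d n (C : 'M[K]_(d, n)) : (d <= 1)%N -> C != 0 -> row_free C.
Proof. by move=> d_le1 C_nz; rewrite -row_leq_rank (leq_trans d_le1) // lt0n mxrank_eq0. Qed.

Lemma row_full_le1 m d (C : 'M[K]_(m, d)) : (d <= 1)%N -> C != 0 -> row_full C.
Proof. by move=> d_le1 C_nz; rewrite -col_leq_rank (leq_trans d_le1) // lt0n mxrank_eq0. Qed.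

Lemma full_rank_factorization_uniq m n d d' (A : 'M[K]_(m, d)) (B : 'M[K]_(d, n))
    (A' : 'M[K]_(m, d')) (B' : 'M[K]_(d', n)) :
  row_full A -> row_free B -> row_full A' -> row_free B' -> A *m B = A' *m B' ->
  exists phi : 'M[K]_(d, d'),
    [/\ row_free phi && row_full phi, B = phi *m B' & A *m phi = A'].
Proof.
move=> /row_fullP[L LA1] B_free A'_full /row_freeP[R B'R1] AB_eq.
have B_eq : B = L *m A' *m B' by rewrite -mulmxA -AB_eq mulmxA LA1 mul1mx.
have A'_eq : A *m (L *m A') = A'.
  have A'E : A' = A *m B *m R by rewrite AB_eq -mulmxA B'R1 mulmx1.
  by rewrite {1}A'E !mulmxA -[A *m L *m A]mulmxA LA1 mulmx1 -A'E.
exists (L *m A'); split=> //; apply/andP; split.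
- rewrite -row_leq_rank (leq_trans _ (mxrankM_maxl _ B')) //.
  by rewrite -B_eq (eqP B_free).
- rewrite -col_leq_rank (leq_trans _ (mxrankM_maxr A _)) //.
  by rewrite A'_eq (eqP A'_full).
Qed.
End Matrices.

Lemma rep_iso_rdim (K : fieldType) (V B : Type) (tl hd : B -> V) (X Y : rep K tl hd) :
  rep_iso X Y -> forall i, rdim X i = rdim Y i.
Proof.
case=> phi [phi_iso _] i; have /andP[/eqP free /eqP full] := phi_iso i.
by rewrite -free full.
Qed.

Section Defect.
Variables (K : fieldType) (I A : finType) (t h : A -> I) (lam : I -> K).

Lemma sum_mxtrace_defect (X : drep K t h) :
  \sum_i \tr (defect lam X i) = - \sum_i lam i * (rdim X i)%:R.
Proof.
have mxtrace_conform (g : A -> I) (F : forall a, 'M[K]_(rdim X (g a))) i :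
    \tr (\sum_(a | g a == i) conform_mx (0 : 'M_(rdim X i)) (F a)) =
    \sum_(a | g a == i) \tr (F a).
  by rewrite raddf_sum; apply: eq_bigr => a /eqP <-; rewrite conform_mx_id.
have sum_fibres (g : A -> I) (F : A -> K) : \sum_i \sum_(a | g a == i) F a = \sum_a F a.
  by rewrite (partition_big g predT).
under eq_bigr do rewrite /defect !raddfB /= !mxtrace_conform mxtraceZ mxtrace1.
rewrite !sumrB !sum_fibres.
under eq_bigr do rewrite mxtrace_mulC.
by rewrite subrr sub0r.
Qed.

Lemma stable_defect (X : drep K t h) (U : forall i, 'M[K]_(rdim X i)) i :
  stable U -> stablemx (U i) (defect lam X i).
Proof.
move=> U_stable.
have stable_conform (g : A -> I) (F : forall a, 'M[K]_(rdim X (g a))) :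
    (forall a, stablemx (U (g a)) (F a)) ->
    stablemx (U i) (\sum_(a | g a == i) conform_mx (0 : 'M_(rdim X i)) (F a)).
  move=> F_stable; apply: (big_ind (fun M => stablemx (U i) M)) => [|M N|a /eqP <-].
  - exact: stablemx0.
  - exact: stablemxD.
  - by rewrite conform_mx_id.
rewrite /defect scalemx1 !stablemxD ?stablemxN ?stablemxC //.
- apply: (stable_conform h) => a; rewrite mulmxA.
  exact: submx_trans (submxMr _ (U_stable (inr a))) (U_stable (inl a)).
- apply: (stable_conform t) => a; rewrite mulmxA.
  exact: submx_trans (submxMr _ (U_stable (inl a))) (U_stable (inr a)).
Qed.

Lemma defect_natural (X Y : drep K t h) (psi : forall i, 'M[K]_(rdim X i, rdim Y i)) :
  (forall b, rmap X b *m psi (dhead t h b) = psi (dtail t h b) *m rmap Y b) ->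
  forall i, defect lam X i *m psi i = psi i *m defect lam Y i.
Proof.
move=> psiP i; rewrite /defect !mulmxBr !mulmxBl !mulmx_sumr !mulmx_suml.
congr (_ - _ - _); last by rewrite -scalemxAl -scalemxAr mul1mx mulmx1.
- apply: eq_bigr => a /eqP <-; rewrite !conform_mx_id.
  by rewrite -mulmxA (psiP (inl a)) mulmxA (psiP (inr a)) mulmxA.
- apply: eq_bigr => a /eqP <-; rewrite !conform_mx_id.
  by rewrite -mulmxA (psiP (inr a)) mulmxA (psiP (inl a)) mulmxA.
Qed.
End Defect.

Section QuiverInf.
Variables (K : fieldType) (I A : finType) (t h : A -> I) (v : I) (lam : I -> K).

Local Notation Xa X := (rmap X (inl None)).
Local Notation Xastar X := (rmap X (inr None)).

Lemma defect_inf_Some (X : drep_inf K t h v) i : i != v ->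
  defect (ilam lam) X (Some i) = defect lam (restrict X) i.
Proof.
move=> i_neq_v.
by rewrite /defect !big_option_cond /= !(inj_eq Some_inj) eq_sym (negbTE i_neq_v) !add0r.
Qed.

Lemma defect_inf_v (X : drep_inf K t h v) :
  defect (ilam lam) X (Some v) = defect lam (restrict X) v + Xastar X *m Xa X.
Proof.
rewrite /defect !big_option_cond /= !(inj_eq Some_inj) eqxx add0r conform_mx_id.
by rewrite -!addrA addrC -!addrA.
Qed.

Lemma defect_inf_None (X : drep_inf K t h v) :
  defect (ilam lam) X None = - (Xa X *m Xastar X).
Proof.
rewrite /defect !big_option_cond /= !big_pred0 // conform_mx_id scale0r.
by rewrite add0r sub0r addr0 subr0.
Qed.

Lemma Pi_module_defect_v (X : drep_inf K t h v) : is_Pi_module (ilam lam) X ->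
  defect lam (restrict X) v = - (Xastar X *m Xa X).
Proof. by move=> X_Pi; apply/eqP; rewrite -subr_eq0 opprK -defect_inf_v X_Pi. Qed.

Lemma rep_iso_S_inf (X : drep_inf K t h v) :
  (forall i, rdim X (Some i) = 0%N) -> rdim X None = 1%N -> rep_iso X (S_inf K t h v).
Proof.
move=> dim0 dim1.
exists (fun o => if o is Some i return 'M_(rdim X o, rdim (S_inf K t h v) o) then 0
                 else pid_mx 1); split.
  case=> [i|]; rewrite /row_free /row_full ?mxrank0 ?dim0 //.
  by rewrite rank_pid_mx ?dim1.
case=> [[a|]|[a|]] /=; rewrite ?mulmx0 //.
suff -> : Xastar X = 0 by rewrite mul0mx.
by move: (Xastar X); rewrite /= dim0 => M; rewrite flatmx0.
Qed.

Definition extend_inf (X : drep_inf K t h v) (U : forall i, 'M[K]_(rdim X (Some i)))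
    (W : 'M[K]_(rdim X None)) : forall o, 'M[K]_(rdim X o) :=
  fun o => if o is Some i then U i else W.

Lemma stable_extend_inf (X : drep_inf K t h v) (U : forall i, 'M[K]_(rdim X (Some i)))
    (W : 'M[K]_(rdim X None)) :
  stable (X := restrict X) U -> (W *m Xa X <= U v)%MS -> (U v *m Xastar X <= W)%MS ->
  stable (extend_inf U W).
Proof.
move=> U_stable W_Xa Xastar_W [[a|]|[a|]] //.
- exact: (U_stable (inl a)).
- exact: (U_stable (inr a)).
Qed.

Lemma simple_extend_inf (X : drep_inf K t h v) (U : forall i, 'M[K]_(rdim X (Some i)))
    (W : 'M[K]_(rdim X None)) :
  simple_rep X -> stable (X := restrict X) U ->
  (W *m Xa X <= U v)%MS -> (U v *m Xastar X <= W)%MS ->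
  (forall i, U i = 0) /\ W = 0 \/ (forall i, row_full (U i)) /\ row_full W.
Proof.
move=> [_ X_simple] U_stable W_Xa Xastar_W.
case: (X_simple _ (stable_extend_inf U_stable W_Xa Xastar_W)) => UW; [left | right];
  (split=> [i|]; [exact: (UW (Some i)) | exact: (UW None)]).
Qed.

Lemma source_restrict_nonzero (X : drep_inf K t h v) :
  source_obj lam X -> exists i, (0 < rdim X (Some i))%N.
Proof.
case=> _ [[o dim_o] _] dim_le1 not_S_inf.
have [i dim_i|dim0] := pickP (fun i => 0 < rdim X (Some i))%N; first by exists i.
exfalso; apply: not_S_inf; apply: rep_iso_S_inf => [i|].
  by apply/eqP; rewrite -leqn0 leqNgt dim0.
case: o dim_o => [i|dim_pos]; first by rewrite dim0.
by apply/eqP; rewrite eqn_leq dim_le1.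
Qed.

Lemma source_row_free_full (X : drep_inf K t h v) :
  source_obj lam X -> row_free (Xa X) /\ row_full (Xastar X).
Proof.
move=> X_source; have [_ X_simple dim_le1 _] := X_source.
have [dim0|dim1] : rdim X None = 0%N \/ rdim X None = 1%N.
  by case: (rdim X None) dim_le1 => [|[|]]; auto.
  by rewrite -row_leq_rank -col_leq_rank {1}dim0 {2}dim0.
have [i dim_i] := source_restrict_nonzero X_source.
have mx1_neq0 n : (0 < n)%N -> (1%:M : 'M[K]_n) != 0.
  by rewrite -mxrank_eq0 mxrank1 -lt0n.
have row_full0 n : row_full (0 : 'M[K]_n) -> n = 0%N.
  by rewrite /row_full mxrank0 => /eqP.
have stable0 : stable (X := restrict X) (fun i => 0) by move=> b; rewrite mul0mx sub0mx.
have stable1 : stable (X := restrict X) (fun i => 1%:M) by move=> b; exact: submx1.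
split; [apply: row_free_le1 | apply: row_full_le1]; rewrite ?dim1 //; apply/eqP => X0.
- have Xa_in : (1%:M *m Xa X <= (0 : 'M_(rdim X (Some v))))%MS.
    by rewrite X0 mulmx0 sub0mx.
  have [[_ W0]|[U_full _]] := simple_extend_inf X_simple stable0 Xa_in (submx1 _).
    by move: W0; apply/eqP/mx1_neq0; rewrite dim1.
  by move: dim_i; rewrite (row_full0 _ (U_full i)).
- have Xastar_in : (1%:M *m Xastar X <= (0 : 'M_(rdim X None)))%MS.
    by rewrite X0 mulmx0 sub0mx.
  have [[U0 _]|[_ W_full]] := simple_extend_inf X_simple stable1 (submx1 _) Xastar_in.
    by move: (U0 i); apply/eqP/mx1_neq0.
  by move: dim1; rewrite (row_full0 _ W_full).
Qed.

Lemma restrict_target (X : drep_inf K t h v) :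
  source_obj lam X -> target_obj v lam (restrict X).
Proof.
move=> X_source; have [X_Pi X_simple dim_le1 _] := X_source.
have defect_v := Pi_module_defect_v X_Pi.
split; split.
- have := sum_mxtrace_defect (ilam lam) X.
  rewrite big1 => [|o _]; last by rewrite X_Pi mxtrace0.
  by rewrite big_option /= mul0r add0r => /esym/eqP; rewrite oppr_eq0 => /eqP.
- by move=> i i_neq_v; rewrite -defect_inf_Some // X_Pi.
- rewrite defect_v mxrank_opp (leq_trans (mxrankM_maxr _ _)) //.
  exact: leq_trans (rank_leq_row _) dim_le1.
- exact: source_restrict_nonzero.
move=> U U_stable.
have [UXastar0|UXastar_nz] := eqVneq (U v *m Xastar X) 0.
  have W_Xa : ((0 : 'M_(rdim X None)) *m Xa X <= U v)%MS by rewrite mul0mx sub0mx.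
  have UXastar_W : (U v *m Xastar X <= (0 : 'M_(rdim X None)))%MS by rewrite UXastar0 sub0mx.
  by case: (simple_extend_inf X_simple U_stable W_Xa UXastar_W) => -[]; [left | right].
have Xa_U : (1%:M *m Xa X <= U v)%MS.
  rewrite mul1mx -(eqmxMfull (Xa X) (row_full_le1 dim_le1 UXastar_nz)) -mulmxA.
  rewrite -[Xastar X *m Xa X]opprK -defect_v mulmxN eqmx_opp.
  exact: stable_defect.
by case: (simple_extend_inf X_simple U_stable Xa_U (submx1 _)) => -[]; [left | right].
Qed.

Lemma restrict_iso (X X' : drep_inf K t h v) :
  rep_iso X X' -> rep_iso (restrict X) (restrict X').
Proof.
case=> phi [phi_iso phi_natural]; exists (fun i => phi (Some i)); split=> [i|[a|a]].
- exact: phi_iso.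
- exact: (phi_natural (inl (Some a))).
- exact: (phi_natural (inr (Some a))).
Qed.

Lemma restrict_iso_reflect (X X' : drep_inf K t h v) :
  source_obj lam X -> source_obj lam X' ->
  rep_iso (restrict X) (restrict X') -> rep_iso X X'.
Proof.
move=> X_source X'_source [psi [psi_iso psi_natural]].
have [X_Pi _ _ _] := X_source; have [X'_Pi _ _ _] := X'_source.
have [Xa_free Xastar_full] := source_row_free_full X_source.
have [Xa'_free Xastar'_full] := source_row_free_full X'_source.
have /andP[psi_free psi_full] := psi_iso v.
have factorizations : Xastar X *m (Xa X *m psi v) = (psi v *m Xastar X') *m Xa X'.
  have := defect_natural lam psi_natural v.
  rewrite (Pi_module_defect_v X_Pi) (Pi_module_defect_v X'_Pi).
  by rewrite mulNmx mulmxN => /oppr_inj; rewrite !mulmxA.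
have [||||phi [phi_iso Xa_phi Xastar_phi]] :=
  full_rank_factorization_uniq _ _ _ _ factorizations => //.
- by rewrite /row_free mxrankMfree.
- by rewrite /row_full (eqmxMfull _ psi_full).
exists (fun o => if o is Some i return 'M_(rdim X o, rdim X' o) then psi i else phi).
split=> [[i|] //|[[a|]|[a|]] //].
- exact: psi_iso.
- exact: (psi_natural (inl a)).
- exact: (psi_natural (inr a)).
Qed.

Definition lift_rdim (Y : drep K t h) (o : option I) : nat :=
  if o is Some i then rdim Y i else \rank (defect lam Y v).

(* A rank factorization of the defect at v, signed so that the relation at v holds. *)
Definition lift_rmap (Y : drep K t h) (b : option A + option A) :
    'M[K]_(lift_rdim Y (dtail (itail t) (ihead h v) b),
           lift_rdim Y (dhead (itail t) (ihead h v) b)) :=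
  match b with
  | inl (Some a) => rmap Y (inl a)
  | inr (Some a) => rmap Y (inr a)
  | inl None => row_base (defect lam Y v)
  | inr None => - col_base (defect lam Y v)
  end.

Definition lift_inf (Y : drep K t h) : drep_inf K t h v := Rep (lift_rmap Y).

Lemma restrict_lift_inf (Y : drep K t h) : rep_iso (restrict (lift_inf Y)) Y.
Proof.
exists (fun i => 1%:M); split=> [i|b].
- by rewrite row_free_unit row_full_unit unitmx1.
- by rewrite mulmx1 mul1mx; case: b.
Qed.

Lemma defect_restrict_lift_inf (Y : drep K t h) i :
  defect lam (restrict (lift_inf Y)) i = defect lam Y i.
Proof. by []. Qed.

Lemma lift_inf_Pi_module (Y : drep K t h) :
  nearly_rep lam v Y -> is_Pi_module (ilam lam) (lift_inf Y).
Proof.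
case=> dim_sum defect0 rank_le1; set D := defect lam Y v.
have trD : \tr D = 0.
  have := sum_mxtrace_defect lam Y; rewrite dim_sum oppr0 (bigD1 v) //= big1 ?addr0 //.
  by move=> i i_neq_v; rewrite defect0 ?mxtrace0.
case=> [i|].
- have [->|i_neq_v] := eqVneq i v; last first.
    by rewrite defect_inf_Some // defect_restrict_lift_inf defect0.
  by rewrite defect_inf_v defect_restrict_lift_inf /= mulNmx mulmx_base subrr.
- rewrite defect_inf_None /= mulmxN opprK; apply: mxtrace_le1_eq0.
    exact: rank_le1.
  by rewrite mxtrace_mulC mulmx_base.
Qed.

Lemma lift_inf_simple (Y : drep K t h) : simple_rep Y -> simple_rep (lift_inf Y).
Proof.
move=> [[i dim_i] Y_simple]; split=> [|U U_stable]; first by exists (Some i).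
set D := defect lam Y v.
have U_restrict_stable : stable (X := Y) (fun i => U (Some i)).
  by case=> a; [exact: (U_stable (inl (Some a))) | exact: (U_stable (inr (Some a)))].
case: (Y_simple _ U_restrict_stable) => [U0|U_full].
  left; case=> [j|]; first exact: U0.
  have := U_stable (inl None); rewrite /= U0 submx0.
  by rewrite (mulmx_free_eq0 _ (row_base_free _)) => /eqP.
right; case=> [j|]; first exact: U_full.
have col_base_U : (col_base D <= U None)%MS.
  rewrite -(eqmx_opp (col_base D)) -[- col_base D]mul1mx.
  apply: submx_trans (U_stable (inr None)); apply: submxMr.
  by rewrite sub1mx; exact: U_full.
by rewrite -sub1mx (submx_trans _ col_base_U) // sub1mx col_base_full.
Qed.

Lemma restrict_surjective (Y : drep K t h) : target_obj v lam Y ->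
  exists X : drep_inf K t h v, source_obj lam X /\ rep_iso (restrict X) Y.
Proof.
case=> Y_nearly Y_simple; have [_ _ rank_le1] := Y_nearly.
exists (lift_inf Y); split; last exact: restrict_lift_inf.
split=> //; [exact: lift_inf_Pi_module | exact: lift_inf_simple |].
case: Y_simple => -[i dim_i] _ /rep_iso_rdim /(_ (Some i)) /= dim0.
by rewrite dim0 in dim_i.
Qed.

End QuiverInf.

Theorem lemma3p3 (K : closedFieldType) (I A : finType) (t h : A -> I)
  (v : I) (lam : I -> K) :
  [/\ (forall X : drep_inf K t h v,
         source_obj lam X -> target_obj v lam (restrict X)),
      (forall X X' : drep_inf K t h v,
         source_obj lam X -> source_obj lam X' ->
         rep_iso X X' -> rep_iso (restrict X) (restrict X')),
      (forall X X' : drep_inf K t h v,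
         source_obj lam X -> source_obj lam X' ->
         rep_iso (restrict X) (restrict X') -> rep_iso X X')
    & (forall Y : drep K t h,
         target_obj v lam Y ->
         exists X : drep_inf K t h v, source_obj lam X /\ rep_iso (restrict X) Y)].
Proof.
split.
- exact: restrict_target.
- by move=> X X' _ _; exact: restrict_iso.
- exact: restrict_iso_reflect.
- exact: restrict_surjective.
Qed.
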